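(* Under the hypotheses of Lemma 2.2, define $T=P_1\phi(P_1)P_2+P_2\phi(P_2)P_1$ and the additive map $\varphi:\mathcal{U}\to\mathcal{U}$ by $\varphi(U)=\phi(U)-\phi(I)U+[T,U]$. Then (1) $\varphi(P_1)=\varphi(P_2)=0$; and (2) $\varphi$ satisfies $\varphi(U)\circ V+U\circ\varphi(V)=0$ for all $U,V\in\mathcal{U}$ with $UV=VU=0$.
   Context: $\mathcal{U}=\begin{pmatrix}\mathcal{A}&\mathcal{M}\\ \mathcal{N}&\mathcal{B}\end{pmatrix}$ is a generalized matrix ring: $\mathcal{A},\mathcal{B}$ unital 2-torsion free rings, $\mathcal{M}$ a unital $(\mathcal{A},\mathcal{B})$-bimodule faithful on both sides, $\mathcal{N}$ a unital $(\mathcal{B},\mathcal{A})$-bimodule, with bimodule pairings $MN\in\mathcal{A}$, $NM\in\mathcal{B}$ satisfying $(MN)M'=M(NM')$, $(NM)N'=N(MN')$; $\mathcal{U}$ consists of $2\times2$ matrices with usual matrix operations and identity $I$. The hypotheses of Lemma 2.2: $\phi:\mathcal{U}\to\mathcal{U}$ is additive and $\phi(U)\circ V+U\circ\phi(V)=0$ whenever $UV=VU=0$. $X\circ Y=XY+YX$, $[X,Y]=XY-YX$. $P_1=\mathrm{diag}(I_{\mathcal{A}},0)$, $P_2=\mathrm{diag}(0,I_{\mathcal{B}})$. *)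

From HB Require Import structures.
From mathcomp Require Import all_boot all_order all_algebra.
Set Implicit Arguments. Unset Strict Implicit. Unset Printing Implicit Defensive.
Import GRing.Theory.
Local Open Scope ring_scope.

(* Data of a generalized matrix ring  U = [A M; N B]. *)
Record GMR := {
  gA : pzRingType; gB : pzRingType; gM : zmodType; gN : zmodType;
  actAM : gA -> gM -> gM;
  actMB : gM -> gB -> gM;
  actBN : gB -> gN -> gN;
  actNA : gN -> gA -> gN;
  pMN : gM -> gN -> gA;
  pNM : gN -> gM -> gB;
  actAM_addl : forall a a' m, actAM (a + a') m = actAM a m + actAM a' m;
  actAM_addr : forall a m m', actAM a (m + m') = actAM a m + actAM a m';
  actAM_mul : forall a a' m, actAM (a * a') m = actAM a (actAM a' m);
  actAM_one : forall m, actAM 1 m = m;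
  actMB_addl : forall m m' b, actMB (m + m') b = actMB m b + actMB m' b;
  actMB_addr : forall m b b', actMB m (b + b') = actMB m b + actMB m b';
  actMB_mul : forall m b b', actMB m (b * b') = actMB (actMB m b) b';
  actMB_one : forall m, actMB m 1 = m;
  actAMB : forall a m b, actMB (actAM a m) b = actAM a (actMB m b);
  actBN_addl : forall b b' n, actBN (b + b') n = actBN b n + actBN b' n;
  actBN_addr : forall b n n', actBN b (n + n') = actBN b n + actBN b n';
  actBN_mul : forall b b' n, actBN (b * b') n = actBN b (actBN b' n);
  actBN_one : forall n, actBN 1 n = n;
  actNA_addl : forall n n' a, actNA (n + n') a = actNA n a + actNA n' a;
  actNA_addr : forall n a a', actNA n (a + a') = actNA n a + actNA n a';
  actNA_mul : forall n a a', actNA n (a * a') = actNA (actNA n a) a';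
  actNA_one : forall n, actNA n 1 = n;
  actBNA : forall b n a, actNA (actBN b n) a = actBN b (actNA n a);
  (* bimodule homomorphisms M (x)_B N -> A and N (x)_A M -> B *)
  pMN_addl : forall m m' n, pMN (m + m') n = pMN m n + pMN m' n;
  pMN_addr : forall m n n', pMN m (n + n') = pMN m n + pMN m n';
  pMN_bal : forall m b n, pMN (actMB m b) n = pMN m (actBN b n);
  pMN_actl : forall a m n, pMN (actAM a m) n = a * pMN m n;
  pMN_actr : forall m n a, pMN m (actNA n a) = pMN m n * a;
  pNM_addl : forall n n' m, pNM (n + n') m = pNM n m + pNM n' m;
  pNM_addr : forall n m m', pNM n (m + m') = pNM n m + pNM n m';
  pNM_bal : forall n a m, pNM (actNA n a) m = pNM n (actAM a m);
  pNM_actl : forall b n m, pNM (actBN b n) m = b * pNM n m;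
  pNM_actr : forall n m b, pNM n (actMB m b) = pNM n m * b;
  pMN_assoc : forall m n m', actAM (pMN m n) m' = actMB m (pNM n m');
  pNM_assoc : forall n m n', actBN (pNM n m) n' = actNA n (pMN m n');
}.

Definition gmr_hyp (G : GMR) : Prop :=
  (forall a : gA G, a + a = 0 -> a = 0) /\
  (forall b : gB G, b + b = 0 -> b = 0) /\
  (forall a : gA G, (forall m, actAM a m = 0) -> a = 0) /\
  (forall b : gB G, (forall m, actMB m b = 0) -> b = 0).

Record mat (G : GMR) := Mat { m11 : gA G; m12 : gM G; m21 : gN G; m22 : gB G }.

Section Ops.
Variable G : GMR.
Definition madd (X Y : mat G) : mat G :=
  Mat (m11 X + m11 Y) (m12 X + m12 Y) (m21 X + m21 Y) (m22 X + m22 Y).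
Definition mopp (X : mat G) : mat G :=
  Mat (- m11 X) (- m12 X) (- m21 X) (- m22 X).
Definition msub (X Y : mat G) : mat G := madd X (mopp Y).
Definition mzero : mat G := Mat 0 0 0 0.
Definition mone : mat G := Mat 1 0 0 1.
Definition mmul (X Y : mat G) : mat G :=
  Mat (m11 X * m11 Y + pMN (m12 X) (m21 Y))
      (actAM (m11 X) (m12 Y) + actMB (m12 X) (m22 Y))
      (actBN (m22 X) (m21 Y) + actNA (m21 X) (m11 Y))
      (pNM (m21 X) (m12 Y) + m22 X * m22 Y).
Definition mP1 : mat G := Mat 1 0 0 0.
Definition mP2 : mat G := Mat 0 0 0 1.
Definition jord (X Y : mat G) : mat G := madd (mmul X Y) (mmul Y X).
Definition comm (X Y : mat G) : mat G := msub (mmul X Y) (mmul Y X).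
End Ops.
Arguments mzero {G}. Arguments mone {G}. Arguments mP1 {G}. Arguments mP2 {G}.

Definition Tof (G : GMR) (phi : mat G -> mat G) : mat G :=
  madd (mmul (mmul mP1 (phi mP1)) mP2) (mmul (mmul mP2 (phi mP2)) mP1).
Definition varphi (G : GMR) (phi : mat G -> mat G) (U : mat G) : mat G :=
  madd (msub (phi U) (mmul (phi mone) U)) (comm (Tof phi) U).

From HB Require Import structures.
From mathcomp Require Import all_boot all_order all_algebra.
Set Implicit Arguments. Unset Strict Implicit. Unset Printing Implicit Defensive.
Import GRing.Theory.
Local Open Scope ring_scope.

(* Write D = phi(I) and Delta(U, V) = phi(U) o V + U o phi(V).  The vanishing of
   Delta(P1, P2), together with 2-torsion freeness, forces phi(P1) = [a m; n 0] and
   phi(P2) = [0 -m; -n b]; hence D = diag(a, b), T = [0 m; -n 0], and (1) is a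
   direct computation.  Delta is biadditive, so expanding Delta(P1 + X, P2 - X) = 0
   for X = E12(m') gives Delta(P1, X) = Delta(X, P2), whose (1,2) entries say
   a m' = m' b; likewise b n' = n' a, and faithfulness of M makes D central.
   Finally the zero-product Jordan property is stable under sums, under subtracting
   a central left multiplication and under adding an inner derivation, which
   yields (2) for varphi = phi - D . + [T, .]. *)

Section Additive.
Variables (U V : zmodType) (f : U -> V).
Hypothesis fD : {morph f : x y / x + y}.

Lemma additive0 : f 0 = 0.
Proof. by apply: (addrI (f 0)); rewrite -fD !addr0. Qed.

Lemma additiveN : {morph f : x / - x}.
Proof. by move=> x; apply: (addrI (f x)); rewrite -fD !subrr additive0. Qed.
End Additive.

Section JordanDefect.
Variable R : pzRingType.
Implicit Types (f g : R -> R) (D T U V X P Q : R).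

Definition jordan_defect f U V := f U * V + V * f U + (U * f V + f V * U).

Definition jordan_zp_derivable f :=
  forall U V, U * V = 0 -> V * U = 0 -> jordan_defect f U V = 0.

Lemma jordan_defect_addf f g U V :
  jordan_defect (fun x => f x + g x) U V = jordan_defect f U V + jordan_defect g U V.
Proof.
rewrite /jordan_defect /= !mulrDl !mulrDr.
by rewrite (addrACA (f U * V)) (addrACA (U * f V)) [LHS]addrACA.
Qed.

Lemma jordan_defect_oppf f U V :
  jordan_defect (fun x => - f x) U V = - jordan_defect f U V.
Proof. by rewrite /jordan_defect /= !mulNr !mulrN !opprD. Qed.

Lemma jordan_zp_derivableD f g :
  jordan_zp_derivable f -> jordan_zp_derivable g ->
  jordan_zp_derivable (fun x => f x + g x).
Proof. by move=> hf hg U V UV VU; rewrite jordan_defect_addf hf ?hg ?addr0. Qed.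

Lemma jordan_zp_derivableN f :
  jordan_zp_derivable f -> jordan_zp_derivable (fun x => - f x).
Proof. by move=> hf U V UV VU; rewrite jordan_defect_oppf hf ?oppr0. Qed.

Lemma jordan_zp_derivable_inner T : jordan_zp_derivable (fun x => T * x - x * T).
Proof.
move=> U V UV VU; rewrite /jordan_defect !mulrBl !mulrBr !mulrA.
rewrite -(mulrA T U) -(mulrA T V) UV VU !mulr0 !mul0r !sub0r !subr0.
by rewrite addrACA addNr subrr addr0.
Qed.

Lemma jordan_zp_derivable_central_mull D :
  (forall x, D * x = x * D) -> jordan_zp_derivable (fun x => D * x).
Proof.
move=> cD U V UV VU; rewrite /jordan_defect -!mulrA UV VU.
by rewrite !mulrA -!cD -!mulrA UV VU !mulr0 !addr0.
Qed.

Lemma jordan_zp_derivable_shift f D T :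
  jordan_zp_derivable f -> (forall x, D * x = x * D) ->
  jordan_zp_derivable (fun x => f x - D * x + (T * x - x * T)).
Proof.
move=> hf cD; apply: jordan_zp_derivableD (jordan_zp_derivable_inner T).
exact: jordan_zp_derivableD hf (jordan_zp_derivableN (jordan_zp_derivable_central_mull cD)).
Qed.

Section Biadditive.
Variable f : R -> R.
Hypothesis fD : {morph f : x y / x + y}.

Lemma jordan_defectDl U U' V :
  jordan_defect f (U + U') V = jordan_defect f U V + jordan_defect f U' V.
Proof.
rewrite /jordan_defect fD !mulrDl !mulrDr.
by rewrite (addrACA (f U * V)) (addrACA (U * f V)) [LHS]addrACA.
Qed.

Lemma jordan_defectDr U V V' :
  jordan_defect f U (V + V') = jordan_defect f U V + jordan_defect f U V'.
Proof.
rewrite /jordan_defect fD !mulrDl !mulrDr.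
by rewrite (addrACA (f U * V)) (addrACA (U * f V)) [LHS]addrACA.
Qed.

Lemma jordan_defectNr U V : jordan_defect f U (- V) = - jordan_defect f U V.
Proof. exact: (@additiveN _ _ (jordan_defect f U) (jordan_defectDr U)). Qed.

Lemma jordan_defect_offdiag P Q X : jordan_zp_derivable f ->
  P * Q = 0 -> Q * P = 0 -> P * X = X -> X * Q = X -> Q * X = 0 -> X * P = 0 ->
  X * X = 0 -> jordan_defect f P X = jordan_defect f X Q.
Proof.
move=> hf PQ QP PX XQ QX XP XX.
have : jordan_defect f (P + X) (Q - X) = 0.
  apply: hf.
  - by rewrite mulrDl !mulrBr PQ PX XQ XX sub0r subr0 addNr.
  - by rewrite mulrBl !mulrDr QP QX XP XX !addr0 subrr.
rewrite jordan_defectDl !jordan_defectDr !jordan_defectNr hf // (hf X X) //.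
by rewrite add0r oppr0 addr0 addrC => /subr0_eq ->.
Qed.
End Biadditive.
End JordanDefect.

(* Closes [s = t] when the summands of [t] are a permutation of those of [s]. *)
Ltac bring_front a := match goal with
  | |- _ = a + _ => idtac
  | |- _ = a => idtac
  | |- _ = _ => first [rewrite [in RHS](addrCA _ a) | rewrite [in RHS](addrC _ a)];
                bring_front a
  end.
Ltac addr_perm := rewrite -?addrA;
  repeat match goal with |- ?a + _ = _ => bring_front a; congr (_ + _) end;
  try reflexivity.

Section Entries.
Variable G : GMR.
Implicit Types (a : gA G) (b : gB G) (m : gM G) (n : gN G) (X Y : mat G).

Lemma actAM0l m : actAM 0 m = 0.
Proof. exact (@additive0 _ _ (fun x => actAM x m) (fun a a' => actAM_addl a a' m)). Qed.
Lemma actMB0l b : actMB 0 b = 0.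
Proof. exact (@additive0 _ _ (fun x => actMB x b) (fun m m' => actMB_addl m m' b)). Qed.
Lemma actBN0l n : actBN 0 n = 0.
Proof. exact (@additive0 _ _ (fun x => actBN x n) (fun b b' => actBN_addl b b' n)). Qed.
Lemma actNA0l a : actNA 0 a = 0.
Proof. exact (@additive0 _ _ (fun x => actNA x a) (fun n n' => actNA_addl n n' a)). Qed.
Lemma pMN0l n : pMN 0 n = 0.
Proof. exact (@additive0 _ _ (fun x => pMN x n) (fun m m' => pMN_addl m m' n)). Qed.
Lemma pNM0l m : pNM 0 m = 0.
Proof. exact (@additive0 _ _ (fun x => pNM x m) (fun n n' => pNM_addl n n' m)). Qed.
Lemma actAM0r a : actAM a 0 = 0. Proof. exact: additive0 (actAM_addr a). Qed.
Lemma actMB0r m : actMB m 0 = 0. Proof. exact: additive0 (actMB_addr m). Qed.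
Lemma actBN0r b : actBN b 0 = 0. Proof. exact: additive0 (actBN_addr b). Qed.
Lemma actNA0r n : actNA n 0 = 0. Proof. exact: additive0 (actNA_addr n). Qed.
Lemma pMN0r m : pMN m 0 = 0. Proof. exact: additive0 (pMN_addr m). Qed.
Lemma pNM0r n : pNM n 0 = 0. Proof. exact: additive0 (pNM_addr n). Qed.

Lemma actAMNl a m : actAM (- a) m = - actAM a m.
Proof. exact (@additiveN _ _ (fun x => actAM x m) (fun a a' => actAM_addl a a' m) a). Qed.
Lemma actMBNr m b : actMB m (- b) = - actMB m b.
Proof. exact: additiveN (actMB_addr m) b. Qed.

Lemma mat_ext X Y :
  m11 X = m11 Y -> m12 X = m12 Y -> m21 X = m21 Y -> m22 X = m22 Y -> X = Y.
Proof. by case: X; case: Y => /= ? ? ? ? ? ? ? ? -> -> -> ->. Qed.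
End Entries.

Ltac entry_expand := rewrite ?(actAM_addl, actAM_addr, actMB_addl, actMB_addr,
  actBN_addl, actBN_addr, actNA_addl, actNA_addr, pMN_addl, pMN_addr, pNM_addl,
  pNM_addr, mulrDl, mulrDr).
Ltac entry_simpl := rewrite ?(actAM0l, actAM0r, actMB0l, actMB0r, actBN0l, actBN0r,
  actNA0l, actNA0r, pMN0l, pMN0r, pNM0l, pNM0r, actAM_one, actMB_one, actBN_one,
  actNA_one, mul0r, mulr0, mul1r, mulr1, oppr0, subr0, add0r, addr0, subrr, addNr).
Ltac mat_eval := apply: mat_ext => /=; entry_simpl.

Section MatrixRing.
Variable G : GMR.
Implicit Types (a : gA G) (b : gB G) (m : gM G) (n : gN G) (X Y Z : mat G).

Definition mat_enc X := (m11 X, m12 X, m21 X, m22 X).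
Definition mat_dec (x : gA G * gM G * gN G * gB G) :=
  let: (a, m, n, b) := x in Mat a m n b.
Lemma mat_encK : cancel mat_enc mat_dec. Proof. by case. Qed.
HB.instance Definition _ := Choice.copy (mat G) (can_type mat_encK).

Lemma maddA : associative (@madd G).
Proof. by move=> X Y Z; apply: mat_ext; rewrite /= addrA. Qed.
Lemma maddC : commutative (@madd G).
Proof. by move=> X Y; apply: mat_ext; rewrite /= addrC. Qed.
Lemma madd0 : left_id mzero (@madd G).
Proof. by move=> X; apply: mat_ext; rewrite /= add0r. Qed.
Lemma maddN : left_inverse mzero (@mopp G) (@madd G).
Proof. by move=> X; apply: mat_ext; rewrite /= addNr. Qed.
HB.instance Definition _ := GRing.isZmodule.Build (mat G) maddA maddC madd0 maddN.

Lemma mmulA : associative (@mmul G).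
Proof.
move=> X Y Z; apply: mat_ext => /=; entry_expand;
  rewrite ?(actAM_mul, actMB_mul, actBN_mul, actNA_mul, actAMB, actBNA, pMN_bal,
    pMN_actl, pMN_actr, pNM_bal, pNM_actl, pNM_actr, pMN_assoc, pNM_assoc, mulrA);
  addr_perm.
Qed.
Lemma mmul1 : left_id mone (@mmul G). Proof. by move=> X; mat_eval. Qed.
Lemma mmulr1 : right_id mone (@mmul G). Proof. by move=> X; mat_eval. Qed.
Lemma mmulDl : left_distributive (@mmul G) (@madd G).
Proof. by move=> X Y Z; apply: mat_ext => /=; entry_expand; addr_perm. Qed.
Lemma mmulDr : right_distributive (@mmul G) (@madd G).
Proof. by move=> X Y Z; apply: mat_ext => /=; entry_expand; addr_perm. Qed.
HB.instance Definition _ :=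
  GRing.Zmodule_isPzRing.Build (mat G) mmulA mmul1 mmulr1 mmulDl mmulDr.

Lemma mP1P2 : mP1 * mP2 = 0 :> mat G. Proof. by mat_eval. Qed.
Lemma mP2P1 : mP2 * mP1 = 0 :> mat G. Proof. by mat_eval. Qed.
Lemma mP1D2 : mP1 + mP2 = 1 :> mat G. Proof. by mat_eval. Qed.

Section Faithful.
Hypothesis faithfulA : forall a, (forall m, actAM a m = 0) -> a = 0.
Hypothesis faithfulB : forall b, (forall m, actMB m b = 0) -> b = 0.

Lemma central_diag a b : (forall m, actAM a m = actMB m b) ->
  (forall n, actBN b n = actNA n a) -> forall X, Mat a 0 0 b * X = X * Mat a 0 0 b.
Proof.
move=> abM baN X.
have ac a' : a * a' = a' * a.
  apply/subr0_eq/faithfulA => m.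
  by rewrite actAM_addl actAMNl !actAM_mul abM actAMB -abM subrr.
have bc b' : b * b' = b' * b.
  apply/subr0_eq/faithfulB => m.
  by rewrite actMB_addr actMBNr !actMB_mul -abM actAMB abM subrr.
by mat_eval; rewrite ?ac ?bc ?abM ?baN.
Qed.
End Faithful.
End MatrixRing.

Section ZeroProductJordanMaps.
Variables (G : GMR) (phi : mat G -> mat G).
Hypotheses (phiD : {morph phi : x y / x + y}) (phi_zp : jordan_zp_derivable phi).

Lemma phi_mP1_mP2_shape :
  (forall a : gA G, a + a = 0 -> a = 0) -> (forall b : gB G, b + b = 0 -> b = 0) ->
  exists a m n b, phi mP1 = Mat a m n 0 /\ phi mP2 = Mat 0 (- m) (- n) b.
Proof.
move=> torsA torsB; have := phi_zp (@mP1P2 G) (@mP2P1 G); rewrite /jordan_defect.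
case: (phi mP1) => a m n b'; case: (phi mP2) => a' m' n' b e.
have /= := congr1 (@m11 G) e; have /= := congr1 (@m12 G) e.
have /= := congr1 (@m21 G) e; have /= := congr1 (@m22 G) e.
entry_simpl => /torsB -> /addr0_eq <- /addr0_eq <- /torsA ->.
by exists a, m, n, b.
Qed.

Section PeirceShape.
Variables (a : gA G) (m : gM G) (n : gN G) (b : gB G).
Hypotheses (phiP1 : phi mP1 = Mat a m n 0) (phiP2 : phi mP2 = Mat 0 (- m) (- n) b).

Lemma phi1 : phi 1 = Mat a 0 0 b.
Proof. by rewrite -mP1D2 phiD phiP1 phiP2; mat_eval. Qed.

Lemma phi1_actM m' : actAM a m' = actMB m' b.
Proof.
pose X := Mat 0 m' 0 0 : mat G.
have [PX XQ QX XP XX] :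
  [/\ mP1 * X = X, X * mP2 = X, mP2 * X = 0, X * mP1 = 0 & X * X = 0].
  by split; mat_eval.
move: (jordan_defect_offdiag phiD phi_zp (@mP1P2 G) (@mP2P1 G) PX XQ QX XP XX).
move/(congr1 (@m12 G)); rewrite /jordan_defect phiP1 phiP2 /=.
by entry_simpl; rewrite addrC => /addrI.
Qed.

Lemma phi1_actN n' : actBN b n' = actNA n' a.
Proof.
pose X := Mat 0 0 n' 0 : mat G.
have [PX XQ QX XP XX] :
  [/\ mP2 * X = X, X * mP1 = X, mP1 * X = 0, X * mP2 = 0 & X * X = 0].
  by split; mat_eval.
move: (jordan_defect_offdiag phiD phi_zp (@mP2P1 G) (@mP1P2 G) PX XQ QX XP XX).
move/(congr1 (@m21 G)); rewrite /jordan_defect phiP1 phiP2 /=.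
by entry_simpl; rewrite addrC => /addrI.
Qed.

Lemma varphi_mP1 : varphi phi mP1 = 0.
Proof. by rewrite /varphi /Tof phi1 phiP1 phiP2; mat_eval. Qed.

Lemma varphi_mP2 : varphi phi mP2 = 0.
Proof. by rewrite /varphi /Tof phi1 phiP1 phiP2; mat_eval. Qed.
End PeirceShape.
End ZeroProductJordanMaps.

Theorem lemma2p4 (G : GMR) (hG : gmr_hyp G) (phi : mat G -> mat G)
  (phi_add : forall U V, phi (madd U V) = madd (phi U) (phi V))
  (phi_zp : forall U V, mmul U V = mzero -> mmul V U = mzero ->
            madd (jord (phi U) V) (jord U (phi V)) = mzero) :
  varphi phi mP1 = mzero /\ varphi phi mP2 = mzero /\
  (forall U V, mmul U V = mzero -> mmul V U = mzero ->
     madd (jord (varphi phi U) V) (jord U (varphi phi V)) = mzero).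
Proof.
have [torsA [torsB [faithA faithB]]] := hG.
have phiD : {morph phi : x y / x + y} := phi_add.
have zp : jordan_zp_derivable phi := phi_zp.
have [a [m [n [b [phiP1 phiP2]]]]] := phi_mP1_mP2_shape zp torsA torsB.
have phi1_central X : phi 1 * X = X * phi 1.
  rewrite (phi1 phiD phiP1 phiP2).
  exact: (central_diag faithA faithB (phi1_actM phiD zp phiP1 phiP2)
                                     (phi1_actN phiD zp phiP1 phiP2)).
split; first exact (varphi_mP1 phiD phiP1 phiP2).
split; first exact (varphi_mP2 phiD phiP1 phiP2).
exact (jordan_zp_derivable_shift (Tof phi) zp phi1_central).
Qed.
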